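(* Let $a,b\geq1$ and $P=[a]\times[b]$. For every $p=(i,j)\in P$, \[\mathbb{1}_p=\sum_{\substack{(i',j')\in P\\ i'\geq i,\ j'\geq j}}T^-_{(i',j')}\;-\;\sum_{\substack{(i',j')\in P\\ i'> i,\ j'> j}}T^+_{(i',j')}\] as functions $\mathcal{J}(P)\to\mathbb{R}$.
   Context: $[a]\times[b]=\{(i,j)\colon 1\le i\le a,\ 1\le j\le b\}$ with $(i,j)\le(i',j')$ iff $i\le i'$ and $j\le j'$. $\mathcal{J}(P)$ is the set of order ideals of $P$. For $x\in P$, $I\in\mathcal{J}(P)$: $\mathbb{1}_x(I)=1$ if $x\in I$, else $0$; $T_x^+(I)=1$ if $x$ is a minimal element of $P\setminus I$, else $0$; $T_x^-(I)=1$ if $x$ is a maximal element of $I$, else $0$. *)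

From mathcomp Require Import all_boot all_order all_algebra.
Set Implicit Arguments. Unset Strict Implicit. Unset Printing Implicit Defensive.
Import Order.TTheory GRing.Theory Num.Theory.

(* The poset [a] x [b], encoded 0-indexed: (i,j) : 'I_a * 'I_b stands for
   (i+1, j+1).  Product order. *)
Definition grid (a b : nat) := ('I_a * 'I_b)%type.

Definition gle (a b : nat) (x y : grid a b) : bool :=
  (x.1 <= y.1)%N && (x.2 <= y.2)%N.

Definition is_order_ideal (a b : nat) (I : {set grid a b}) : Prop :=
  forall x y : grid a b, y \in I -> gle x y -> x \in I.

Definition Tplus (a b : nat) (x : grid a b) (I : {set grid a b}) : bool :=
  (x \notin I) && [forall y : grid a b, ((y \notin I) && gle y x) ==> (y == x)].

Definition Tminus (a b : nat) (x : grid a b) (I : {set grid a b}) : bool :=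
  (x \in I) && [forall y : grid a b, ((y \in I) && gle x y) ==> (y == x)].

(* Extend the indicator f of the ideal by 0 outside the grid.  Because I is a
   down-set, T^-_(i,j) = f(i,j) (1 - f(i+1,j)) (1 - f(i,j+1)) and
   T^+_(i+1,j+1) = (1 - f(i+1,j+1)) f(i+1,j) f(i,j+1), and the difference of
   these two products is the mixed second difference
   f(i,j) - f(i+1,j) - f(i,j+1) + f(i+1,j+1).  Summed over the quadrant above
   p this telescopes in both coordinates down to f(p). *)

From mathcomp Require Import all_boot all_order all_algebra.
Set Implicit Arguments. Unset Strict Implicit. Unset Printing Implicit Defensive.
Import Order.TTheory GRing.Theory Num.Theory.
Local Open Scope ring_scope.

Section GridExtension.
Variables (n m : nat).

Definition grid_ext (T : Type) (x0 : T) (F : grid n.+1 m.+1 -> T) (i j : nat) : T :=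
  if (i <= n)%N && (j <= m)%N then F (inord i, inord j) else x0.

Lemma grid_ext_in T (x0 : T) F i j : (i <= n)%N -> (j <= m)%N ->
  grid_ext x0 F i j = F (inord i, inord j).
Proof. by move=> hi hj; rewrite /grid_ext hi hj. Qed.

Lemma grid_ext_out T (x0 : T) F i j : ~~ ((i <= n)%N && (j <= m)%N) ->
  grid_ext x0 F i j = x0.
Proof. by rewrite /grid_ext => /negbTE ->. Qed.

Lemma grid_ext_val T (x0 : T) F (q : grid n.+1 m.+1) : grid_ext x0 F q.1 q.2 = F q.
Proof.
by case: q => i j; rewrite grid_ext_in -1?ltnS ?ltn_ord //= !inord_val.
Qed.

Lemma grid_ext_true F i j : grid_ext false F i j ->
  [/\ (i <= n)%N, (j <= m)%N & F (inord i, inord j)].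
Proof. by rewrite /grid_ext; case: ifP => // /andP[]. Qed.

Lemma natr_grid_ext (R : pzSemiRingType) (F : grid n.+1 m.+1 -> bool) i j :
  grid_ext 0 (fun q => (F q)%:R) i j = (grid_ext false F i j)%:R :> R.
Proof. by rewrite /grid_ext; case: ifP. Qed.

Lemma inord_pair_eq i j (x : grid n.+1 m.+1) : (i <= n)%N -> (j <= m)%N ->
  ((inord i, inord j) == x) = (i == x.1) && (j == x.2).
Proof. by move=> hi hj; case: x => x1 x2; rewrite xpair_eqE -!val_eqE /= !inordK. Qed.

Lemma sum_grid_ext (V : nmodType) (F : grid n.+1 m.+1 -> V) k l :
  \sum_(q : grid n.+1 m.+1 | (k <= q.1)%N && (l <= q.2)%N) F q
  = \sum_(k <= i < n.+1) \sum_(l <= j < m.+1) grid_ext 0 F i j.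
Proof.
transitivity (\sum_(i < n.+1 | (k <= i)%N) \sum_(j < m.+1 | (l <= j)%N) F (i, j)).
  by rewrite pair_big_dep; apply: (eq_big (I := grid n.+1 m.+1)) => // -[].
rewrite big_geq_mkord; apply: eq_big => // i _.
rewrite big_geq_mkord; apply: eq_big => // j _.
by rewrite -[in LHS](grid_ext_val 0 F (i, j)).
Qed.

End GridExtension.

Lemma sum_nat_shift (V : nmodType) (G : nat -> V) k N : (k <= N)%N -> G N.+1 = 0 ->
  \sum_(k.+1 <= i < N.+1) G i = \sum_(k <= i < N.+1) G i.+1.
Proof. by move=> hk G0; rewrite big_add1 big_nat_recr //= G0 addr0. Qed.

Lemma telescope_sumr_down (V : zmodType) (u : nat -> V) k N : (k <= N)%N ->
  \sum_(k <= i < N) (u i - u i.+1) = u k - u N.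
Proof.
move=> hk; rewrite -[RHS]opprB -(telescope_sumr _ hk) -sumrN.
by apply: eq_bigr => i _; rewrite opprB.
Qed.

Lemma telescope_sumr2 (V : zmodType) (f : nat -> nat -> V) k l N M :
  (k <= N)%N -> (l <= M)%N ->
  \sum_(k <= i < N) \sum_(l <= j < M) ((f i j - f i.+1 j) - (f i j.+1 - f i.+1 j.+1))
  = (f k l - f N l) - (f k M - f N M).
Proof.
move=> hk hl.
under eq_bigr => i _ do rewrite (telescope_sumr_down (fun j => f i j - f i.+1 j) hl).
by rewrite sumrB (telescope_sumr_down (f^~ l)) // (telescope_sumr_down (f^~ M)).
Qed.

Lemma natr_corner (R : pzRingType) (x y z w : bool) :
  y ==> x -> z ==> x -> w ==> y -> w ==> z ->
  [&& x, ~~ y & ~~ z]%:R - [&& ~~ w, y & z]%:R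
  = (x%:R - y%:R) - (z%:R - w%:R) :> R.
Proof.
by case: x; case: y; case: z; case: w => //= *;
  rewrite ?(subr0, sub0r, subrr, opprK).
Qed.

Section OrderIdeal.
Variables (n m : nat) (I : {set grid n.+1 m.+1}).
Hypothesis hI : is_order_ideal I.

Local Notation inI := (grid_ext false (fun q => q \in I)).

Lemma inI_down i j i' j' : inI i j -> (i' <= i)%N -> (j' <= j)%N -> inI i' j'.
Proof.
case/grid_ext_true => hi hj /= hij hii hjj.
have [hi' hj'] := (leq_trans hii hi, leq_trans hjj hj).
rewrite grid_ext_in //; apply: (hI hij).
by rewrite /gle /= !inordK // hii.
Qed.

Lemma Tminus_ext i j :
  grid_ext false (fun q => Tminus q I) i j = [&& inI i j, ~~ inI i.+1 j & ~~ inI i j.+1].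
Proof.
have [/andP[hi hj] | out] := boolP ((i <= n)%N && (j <= m)%N); last first.
  by rewrite !(grid_ext_out _ _ out).
rewrite !(grid_ext_in _ _ hi hj) /Tminus; case: (_ \in I) => //=.
apply/forallP/andP => [maxq | [/negP no1 /negP no2] y].
  split; apply/negP => /grid_ext_true[hi' hj' Iup].
    have := maxq (inord i.+1, inord j).
    by rewrite Iup inord_pair_eq //= /gle /= !inordK // leqnSn leqnn (gtn_eqF (ltnSn i)).
  have := maxq (inord i, inord j.+1).
  by rewrite Iup inord_pair_eq //= /gle /= !inordK // leqnSn leqnn (gtn_eqF (ltnSn j)) andbF.
apply/implyP => /andP[yI]; rewrite /gle /= !inordK // => /andP[le1 le2].
have yI' : inI y.1 y.2 by rewrite grid_ext_val.
rewrite eq_sym inord_pair_eq // !eqn_leq le1 le2 /=.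
apply/andP; split; rewrite leqNgt; apply/negP => lt.
  by apply: no1; apply: inI_down yI' lt le2.
by apply: no2; apply: inI_down yI' le1 lt.
Qed.

Lemma Tplus_extS i j : grid_ext false (fun q => Tplus q I) i.+1 j.+1
  = [&& ~~ inI i.+1 j.+1, inI i.+1 j & inI i j.+1].
Proof.
have [/andP[hi hj] | out] := boolP ((i.+1 <= n)%N && (j.+1 <= m)%N); last first.
  rewrite (grid_ext_out _ _ out); apply/esym/and3P.
  by case=> _ /grid_ext_true[hi _ _] /grid_ext_true[_ hj _]; rewrite hi hj in out.
have [hi' hj'] := (ltnW hi, ltnW hj).
rewrite !(grid_ext_in _ _ hi hj) /Tplus; case: (_ \in I) => //=.
apply/forallP/andP => [minq | [in_down2 in_down1] y].
  split; rewrite grid_ext_in //; apply/negPn/negP => notI.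
    have := minq (inord i.+1, inord j).
    by rewrite inord_pair_eq //= /gle /= !inordK // notI leqnSn leqnn eqxx (ltn_eqF (ltnSn j)).
  have := minq (inord i, inord j.+1).
  by rewrite inord_pair_eq //= /gle /= !inordK // notI leqnSn leqnn (ltn_eqF (ltnSn i)).
apply/implyP => /andP[yO]; rewrite /gle /= !inordK // => /andP[le1 le2].
rewrite eq_sym inord_pair_eq // !eqn_leq le1 le2 !andbT.
apply/andP; split; rewrite ltnNge; apply/negP => le; move/negP: yO; apply;
  rewrite -(grid_ext_val false (fun q => q \in I) y).
  exact: inI_down in_down1 le le2.
exact: inI_down in_down2 le1 le.
Qed.

Lemma natr_ideal_corner (R : pzRingType) i j :
  grid_ext 0 (fun q => (Tminus q I)%:R) i j
    - grid_ext 0 (fun q => (Tplus q I)%:R) i.+1 j.+1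
  = ((inI i j)%:R - (inI i.+1 j)%:R) - ((inI i j.+1)%:R - (inI i.+1 j.+1)%:R) :> R.
Proof.
rewrite !natr_grid_ext Tminus_ext Tplus_extS.
by apply: natr_corner; apply/implyP => h; apply: inI_down h _ _; rewrite ?leqnSn.
Qed.

End OrderIdeal.

Theorem lemma3p8 (R : realFieldType) (a b : nat) (ha : (1 <= a)%N) (hb : (1 <= b)%N)
  (p : grid a b) (I : {set grid a b}) (hI : is_order_ideal I) :
  ((p \in I)%:R : R) =
    \sum_(q : grid a b | (p.1 <= q.1)%N && (p.2 <= q.2)%N) ((Tminus q I)%:R : R)
  - \sum_(q : grid a b | (p.1 < q.1)%N && (p.2 < q.2)%N) ((Tplus q I)%:R : R).
Proof.
case: a ha p I hI => // n _; case: b hb => // m _ p I hI.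
have hp1 : (p.1 <= n)%N := ltn_ord p.1.
have hp2 : (p.2 <= m)%N := ltn_ord p.2.
set Tp := grid_ext 0 (fun q => (Tplus q I)%:R : R).
have Tp_out1 j : Tp n.+1 j = 0 by rewrite /Tp grid_ext_out // ltnn.
have Tp_out2 i : Tp i m.+1 = 0 by rewrite /Tp grid_ext_out // ltnn andbF.
rewrite !sum_grid_ext sum_nat_shift //; last by rewrite big1.
under [X in _ - X]eq_bigr => i _ do rewrite sum_nat_shift //.
rewrite -sumrB; under eq_bigr => i _ do rewrite -sumrB.
under eq_bigr => i _ do under eq_bigr => j _ do rewrite natr_ideal_corner //.
set inI := grid_ext false (fun q => q \in I).
have inI_out1 j : inI n.+1 j = false by rewrite /inI grid_ext_out // ltnn.
have inI_out2 i : inI i m.+1 = false by rewrite /inI grid_ext_out // ltnn andbF.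
rewrite (telescope_sumr2 (fun i j => (inI i j)%:R)) ?leqW // !inI_out1 inI_out2.
by rewrite /inI grid_ext_val !subr0.
Qed.
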